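(* Let $(X,\{\tau_k:k<\omega\})$ be a GLP-space and $n<\omega$, and suppose $(X,\tau_{n+1})$ is compact. Then for all $A,B\subseteq X$ and every limit ordinal $\lambda$: $$d_n^\lambda[A]\subseteq d_n(B)\iff \exists\alpha<\lambda\ \ d_n^\alpha[A]\subseteq d_n(B).$$
   Context: For a topology $\tau_n$ on $X$, $d_n(A)$ denotes the set of $\tau_n$-limit points of $A\subseteq X$. A GLP-space is a nonempty set $X$ with topologies $\tau_n$, $n<\omega$, such that $({\mathcal P}(X),\{d_n\})$ is a GLP-algebra, i.e. for all $n$, $m<n$, $x,y\subseteq X$: $d_n(x\cup y)=d_n(x)\cup d_n(y)$; $d_n(\emptyset)=\emptyset$; $d_n(x)=d_n(x\setminus d_n(x))$; $d_n(x)\subseteq d_m(x)$; $d_m(x)\subseteq X\setminus d_n(X\setminus d_m(x))$. For $A\subseteq X$ define by transfinite recursion $d_n^0[A]=X$, $d_n^{\alpha+1}[A]=d_n(d_n^\alpha[A]\cap A)$, and $d_n^\lambda[A]=\bigcap_{\alpha<\lambda}d_n^\alpha[A]$ for limit $\lambda$. *)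

From Stdlib Require Import List.
Set Implicit Arguments.

Definition set (X : Type) := X -> Prop.
Definition subset {X} (A B : set X) : Prop := forall x, A x -> B x.
Definition seteq {X} (A B : set X) : Prop := forall x, A x <-> B x.
Definition setU {X} (A B : set X) : set X := fun x => A x \/ B x.
Definition setI {X} (A B : set X) : set X := fun x => A x /\ B x.
Definition setD {X} (A B : set X) : set X := fun x => A x /\ ~ B x.
Definition setT {X} : set X := fun _ => True.
Definition set0 {X} : set X := fun _ => False.

Definition is_topology {X} (O : set X -> Prop) : Prop :=
  O set0 /\ O setT /\
  (forall F : set X -> Prop, (forall U, F U -> O U) ->
      O (fun x => exists U, F U /\ U x)) /\
  (forall U V, O U -> O V -> O (setI U V)).

Definition derived {X} (O : set X -> Prop) (A : set X) : set X :=
  fun x => forall U, O U -> U x -> exists y, U y /\ A y /\ y <> x.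

Definition compact {X} (O : set X -> Prop) : Prop :=
  forall F : set X -> Prop, (forall U, F U -> O U) ->
    (forall x, exists U, F U /\ U x) ->
    exists l : list (set X), (forall U, In U l -> F U) /\
      (forall x, exists U, In U l /\ U x).

(* GLP-space: nonempty X with topologies tau n such that (P(X), {d_n}) is a GLP-algebra *)
Definition GLP_space {X} (tau : nat -> set X -> Prop) : Prop :=
  inhabited X /\
  (forall n, is_topology (tau n)) /\
  (forall n (x y : set X),
      seteq (derived (tau n) (setU x y)) (setU (derived (tau n) x) (derived (tau n) y))) /\
  (forall n, seteq (derived (tau n) set0) set0) /\
  (forall n (x : set X),
      seteq (derived (tau n) x) (derived (tau n) (setD x (derived (tau n) x)))) /\
  (forall n m (x : set X), m < n -> subset (derived (tau n) x) (derived (tau m) x)) /\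
  (forall n m (x : set X), m < n ->
      subset (derived (tau m) x)
             (setD setT (derived (tau n) (setD setT (derived (tau m) x))))).

(* A strict well-order on L: L (with lt) represents an ordinal, its elements the
   smaller ordinals. *)
Definition well_order {L : Type} (lt : L -> L -> Prop) : Prop :=
  well_founded lt /\ (forall a b c, lt a b -> lt b c -> lt a c) /\
  (forall a b, lt a b \/ a = b \/ lt b a).

(* nonzero limit ordinal: nonempty, no largest element *)
Definition is_limit {L : Type} (lt : L -> L -> Prop) : Prop :=
  inhabited L /\ forall a, exists b, lt a b.

Definition ipred {L : Type} (lt : L -> L -> Prop) (b a : L) : Prop :=
  lt b a /\ ~ (exists c, lt b c /\ lt c a).

(* Transfinite iterate d^alpha[A] for alpha ranging over the well-order (L,lt):
   d^alpha = d(d^beta ∩ A) if alpha = beta+1, and the intersection of all d^beta,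
   beta < alpha, otherwise (this gives X for alpha = 0). *)
Definition dpow {X L : Type} (lt : L -> L -> Prop) (wf : well_founded lt)
    (d : set X -> set X) (A : set X) : L -> set X :=
  Fix wf (fun _ => set X)
    (fun a rec => fun x =>
       (exists b (H : lt b a), ipred lt b a /\ d (fun y => rec b H y /\ A y) x) \/
       ((~ exists b, ipred lt b a) /\ forall b (H : lt b a), rec b H x)).
Arguments dpow {X L} lt wf d A _ _.

(* Every iterate d_n^alpha[A] is closed in the finer topology tau_(n+1): successor
   stages are derived sets d_n(Y), which are tau_n-closed because d_n d_n Y is
   contained in d_n Y, and limit stages are intersections.  The iterates decrease,
   and d_n(B) is tau_(n+1)-open by the last GLP axiom.  So if the intersection of
   the iterates below lambda lies in d_n(B), their complements together with d_n(B)
   cover the tau_(n+1)-compact space; a finite subcover and the linearity of the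
   indices yield a single alpha < lambda with d_n^alpha[A] inside d_n(B). *)

From Stdlib Require Import List Classical FunctionalExtensionality.

Set Implicit Arguments.

Definition open {X} (O : set X -> Prop) (S : set X) : Prop :=
  forall x, S x -> exists V, O V /\ V x /\ subset V S.

Definition closed {X} (O : set X -> Prop) (S : set X) : Prop :=
  forall x, ~ S x -> exists V, O V /\ V x /\ forall y, V y -> ~ S y.

Section Derived.

Variables (X : Type) (O : set X -> Prop).

Lemma derived_mono (A B : set X) :
  subset A B -> subset (derived O A) (derived O B).
Proof.
  intros HAB x Hx U HU Ux. destruct (Hx U HU Ux) as [y [Uy [Ay yx]]].
  exists y; auto.
Qed.

Lemma not_derived (A : set X) x :
  ~ derived O A x -> exists U, O U /\ U x /\ forall y, U y -> A y -> y = x.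
Proof.
  intro H. apply NNPP; intro H2; apply H; intros U HU Ux.
  apply NNPP; intro H3; apply H2; exists U; repeat split; auto.
  intros y Uy Ay; apply NNPP; intro; apply H3; eauto.
Qed.

Lemma nbhd_of_not_derived_compl (U : set X) x :
  U x -> ~ derived O (setD setT U) x -> exists V, O V /\ V x /\ subset V U.
Proof.
  intros Ux Hn. destruct (not_derived Hn) as [V [HV [Vx HVU]]].
  exists V; repeat split; auto.
  intros y Vy. apply NNPP; intro nUy.
  assert (y = x) as -> by (apply HVU; [exact Vy | split; [exact I | exact nUy]]).
  exact (nUy Ux).
Qed.

Hypothesis Htop : is_topology O.
Hypothesis Hdd : forall Y, seteq (derived O Y) (derived O (setD Y (derived O Y))).

(* If z were in d(dY) but not in dY, take U isolating z from Y; then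
   S = {z} u (U n d{z}) satisfies S <= dS, so S \ dS is empty, yet z in dS. *)
Lemma derived_derived_sub (Y : set X) : subset (derived O (derived O Y)) (derived O Y).
Proof.
  intros z Hz. apply NNPP; intro Hn.
  destruct (not_derived Hn) as [U [HU [Uz HUY]]].
  destruct Htop as [_ [HT [_ HI]]].
  set (S := fun v => v = z \/ (U v /\ derived O (fun t => t = z) v)).
  assert (HS : forall v, S v -> derived O S v).
  { intros v [-> | [_ Dv]].
    - intros V HV Vz.
      destruct (Hz (setI V U) (HI _ _ HV HU) (conj Vz Uz))
        as [w [[Vw Uw] [DYw wz]]].
      exists w; repeat split; auto. right; split; [exact Uw |].
      intros W HW Ww.
      destruct (DYw (setI W U) (HI _ _ HW HU) (conj Ww Uw)) as [y [[Wy Uy] [Yy yw]]].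
      exists y; repeat split; auto.
    - apply (derived_mono (A := fun t => t = z)); [| exact Dv].
      intros t Ht; left; exact Ht. }
  destruct (proj1 (Hdd S z) (HS z (or_introl eq_refl)) setT HT I)
    as [y [_ [[Sy nDy] _]]].
  exact (nDy (HS y Sy)).
Qed.

Lemma derived_closed (Y : set X) : closed O (derived O Y).
Proof.
  intros x Hx.
  assert (Hxx : ~ derived O (derived O Y) x)
    by (intro H; exact (Hx (derived_derived_sub H))).
  destruct (not_derived Hxx) as [U [HU [Ux HUY]]].
  exists U; repeat split; auto.
  intros y Uy DYy. assert (y = x) as -> by auto. exact (Hx DYy).
Qed.

End Derived.

Section Refinement.

Variables (X : Type) (O O' : set X -> Prop).

Hypothesis Hfiner : forall Y, subset (derived O' Y) (derived O Y).

Lemma refine_nbhd U x : O U -> U x -> exists V, O' V /\ V x /\ subset V U.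
Proof.
  intros HU Ux. apply (nbhd_of_not_derived_compl Ux).
  intro H. destruct (@Hfiner (setD setT U) x H U HU Ux) as [y [Uy [[_ nUy] _]]].
  exact (nUy Uy).
Qed.

Lemma closed_refine S : closed O S -> closed O' S.
Proof.
  intros HS x Sx. destruct (HS x Sx) as [U [HU [Ux HUS]]].
  destruct (@refine_nbhd U x HU Ux) as [V [HV [Vx VU]]].
  exists V; repeat split; auto.
Qed.

End Refinement.

Section Iterates.

Variables (X L : Type) (lt : L -> L -> Prop).
Hypothesis Hwo : well_order lt.
Variables (wf : well_founded lt) (d : set X -> set X) (A : set X).

Notation P := (dpow lt wf d A).

Lemma dpow_eq a :
  P a = fun x =>
    (exists b (H : lt b a), ipred lt b a /\ d (fun y => P b y /\ A y) x) \/
    ((~ exists b, ipred lt b a) /\ forall b (H : lt b a), P b x).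
Proof.
  unfold dpow at 1. rewrite Fix_eq; [reflexivity |].
  intros a' f g Hfg.
  replace g with f; [reflexivity |].
  apply functional_extensionality_dep; intro y.
  apply functional_extensionality_dep; apply Hfg.
Qed.

Lemma ipred_uniq b b' a : ipred lt b a -> ipred lt b' a -> b = b'.
Proof.
  intros [H1 H2] [H3 H4]. destruct Hwo as [_ [_ Htri]].
  destruct (Htri b b') as [h | [h | h]]; auto.
  - exfalso; apply H2; eauto.
  - exfalso; apply H4; eauto.
Qed.

Lemma dpow_succ b a : ipred lt b a -> seteq (P a) (d (setI (P b) A)).
Proof.
  intros Hb x. rewrite dpow_eq. split.
  - intros [[b' [_ [Hb' Hd]]] | [Hn _]].
    + rewrite (ipred_uniq Hb Hb'). exact Hd.
    + exfalso; eauto.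
  - intro Hd. left. exists b, (proj1 Hb). auto.
Qed.

Lemma dpow_limit a :
  ~ (exists b, ipred lt b a) -> seteq (P a) (fun x => forall b, lt b a -> P b x).
Proof.
  intros Hn x. rewrite dpow_eq. split.
  - intros [[b [_ [Hb _]]] | [_ Hall]]; [exfalso; eauto | exact Hall].
  - intro Hall. right. auto.
Qed.

Lemma dpow_closed (O : set X -> Prop) :
  (forall Y, closed O (d Y)) -> forall a, closed O (P a).
Proof.
  intros Hd a. induction a as [a IHa] using (well_founded_induction wf).
  intros x Hx.
  destruct (classic (exists b, ipred lt b a)) as [[b Hb] | Hnsucc].
  - destruct (Hd (setI (P b) A) x (fun H => Hx (proj2 (dpow_succ Hb x) H)))
      as [V [HV [Vx HVd]]].
    exists V; repeat split; auto.
    intros y Vy Py. exact (HVd y Vy (proj1 (dpow_succ Hb y) Py)).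
  - assert (Hex : exists b, lt b a /\ ~ P b x).
    { apply NNPP; intro h; apply Hx, (dpow_limit Hnsucc).
      intros b Hb; apply NNPP; eauto. }
    destruct Hex as [b [Hb Hbx]].
    destruct (IHa b Hb x Hbx) as [V [HV [Vx HVb]]].
    exists V; repeat split; auto.
    intros y Vy Py. exact (HVb y Vy (proj1 (dpow_limit Hnsucc y) Py b Hb)).
Qed.

Hypothesis Hd_mono : forall Y Z, subset Y Z -> subset (d Y) (d Z).

Lemma dpow_antitone a b : lt b a -> subset (P a) (P b).
Proof.
  destruct Hwo as [_ [Htrans Htri]].
  revert b. induction a as [a IHa] using (well_founded_induction wf).
  destruct (classic (exists c, ipred lt c a)) as [[c Hc] | Hnsucc];
    [| intros b Hb x Hx; exact (proj1 (dpow_limit Hnsucc x) Hx b Hb)].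
  assert (Hbc : forall b, lt b a -> lt b c \/ b = c).
  { intros b Hb. destruct (Htri b c) as [h | [h | h]]; auto.
    exfalso; apply (proj2 Hc); eauto. }
  intro b. induction b as [b IHb] using (well_founded_induction wf).
  intros Hb x Hx. apply (dpow_succ Hc) in Hx.
  destruct (classic (exists e, ipred lt e b)) as [[e He] | Hblim].
  - apply (dpow_succ He). revert Hx. apply Hd_mono.
    intros y [Py Ay]; split; [| exact Ay].
    destruct (Hbc b Hb) as [h | ->].
    + exact (IHa c (proj1 Hc) e (Htrans _ _ _ (proj1 He) h) y Py).
    + exact (IHa c (proj1 Hc) e (proj1 He) y Py).
  - apply (dpow_limit Hblim). intros e He.
    apply (IHb e He (Htrans _ _ _ He Hb)). apply (dpow_succ Hc). exact Hx.
Qed.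

Lemma dpow_directed a1 a2 : exists a, subset (P a) (P a1) /\ subset (P a) (P a2).
Proof.
  destruct Hwo as [_ [_ Htri]].
  destruct (Htri a1 a2) as [h | [<- | h]].
  - exists a2. split; [exact (dpow_antitone h) | intros x Hx; exact Hx].
  - exists a1. split; intros x Hx; exact Hx.
  - exists a1. split; [intros x Hx; exact Hx | exact (dpow_antitone h)].
Qed.

End Iterates.

Section Compactness.

Variables (X L : Type) (O : set X -> Prop) (P : L -> set X) (G : set X).
Hypothesis HP_inh : inhabited L.
Hypothesis HP_dir : forall a1 a2, exists a, subset (P a) (P a1) /\ subset (P a) (P a2).

Definition covers_or_avoids (a : L) (U : set X) : Prop :=
  subset U G \/ forall y, U y -> ~ P a y.

Lemma list_covers_or_avoids (l : list (set X)) :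
  (forall U, In U l -> exists a, covers_or_avoids a U) ->
  exists a, forall U, In U l -> covers_or_avoids a U.
Proof.
  induction l as [| U l IH]; intros Hl.
  - destruct HP_inh as [a]. exists a. intros U [].
  - destruct IH as [a1 Ha1]; [intros V HV; apply Hl; right; exact HV |].
    destruct (Hl U (or_introl eq_refl)) as [a2 Ha2].
    destruct (HP_dir a1 a2) as [a [S1 S2]].
    exists a. intros V [<- | HV].
    + destruct Ha2 as [h | h]; [left; exact h | right].
      intros y Vy Py; exact (h y Vy (S2 y Py)).
    + destruct (Ha1 V HV) as [h | h]; [left; exact h | right].
      intros y Vy Py; exact (h y Vy (S1 y Py)).
Qed.

Lemma compact_directed_closed_sub_open :
  compact O -> (forall a, closed O (P a)) -> open O G ->
  subset (fun x => forall a, P a x) G -> exists a, subset (P a) G.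
Proof.
  intros Hc HPcl HG Hsub.
  set (F := fun U => O U /\ exists a, covers_or_avoids a U).
  destruct (Hc F) as [l [Hl Hcov]].
  - intros U [HU _]; exact HU.
  - intro x. destruct (classic (forall a, P a x)) as [Hall | Hna].
    + destruct (HG x (Hsub x Hall)) as [V [HV [Vx VG]]].
      exists V. repeat split; auto. destruct HP_inh as [a]. exists a; left; exact VG.
    + apply not_all_ex_not in Hna as [a Ha].
      destruct (HPcl a x Ha) as [V [HV [Vx HVP]]].
      exists V. repeat split; auto. exists a; right; exact HVP.
  - destruct (list_covers_or_avoids l (fun U HU => proj2 (Hl U HU))) as [a Ha].
    exists a. intros x Px.
    destruct (Hcov x) as [U [HU Ux]].
    destruct (Ha U HU) as [h | h]; [exact (h x Ux) | exfalso; exact (h x Ux Px)].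
Qed.

End Compactness.

Theorem mainTheorem6 (X : Type) (tau : nat -> set X -> Prop) (n : nat)
  (HGLP : GLP_space tau) (Hcpt : compact (tau (S n)))
  (A B : set X)
  (L : Type) (lt : L -> L -> Prop) (Hwo : well_order lt) (wf : well_founded lt)
  (Hlim : is_limit lt) :
  subset (fun x => forall a : L, dpow lt wf (derived (tau n)) A a x)
         (derived (tau n) B)
  <-> exists a : L, subset (dpow lt wf (derived (tau n)) A a) (derived (tau n) B).
Proof.
  destruct HGLP as [_ [Htop [_ [_ [Hdd [Hfiner Hopen]]]]]].
  set (D := derived (tau n)).
  assert (Hfiner_succ : forall Y, subset (derived (tau (S n)) Y) (D Y))
    by (intro Y; apply Hfiner; constructor).
  assert (HDB : open (tau (S n)) (D B)).
  { intros x Hx. apply nbhd_of_not_derived_compl; [exact Hx |].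
    exact (proj2 (Hopen (S n) n B (le_n _) x Hx)). }
  assert (Hcl : forall a, closed (tau (S n)) (dpow lt wf D A a)).
  { apply (dpow_closed Hwo). intro Y.
    apply (closed_refine Hfiner_succ), derived_closed; [exact (Htop n) | exact (Hdd n)]. }
  split.
  - apply (compact_directed_closed_sub_open (O := tau (S n))); auto.
    + exact (proj1 Hlim).
    + apply dpow_directed; [exact Hwo |].
      intros Y Z; apply derived_mono.
  - intros [a Ha] x Hx. exact (Ha x (Hx a)).
Qed.
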